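(* Let $N\ge0$ be an integer and $\epsilon$ a nonzero real number. The normalized state $$|\tilde N\rangle=\frac{1}{\sqrt{\mathcal N}}\,\frac{\sqrt{N!}}{N+1}\,\frac{e^{\epsilon^2/2}}{\epsilon^N}\sum_{k=0}^N e^{-2\pi i kN/(N+1)}\,\big|\epsilon e^{2\pi i k/(N+1)}\big\rangle,\qquad \mathcal N=N!\sum_{k=0}^\infty\frac{\epsilon^{2k(N+1)}}{(k(N+1)+N)!},$$ a superposition of $N+1$ coherent states, approximates the Fock state $|N\rangle$ with fidelity $$|\langle N|\tilde N\rangle|^2=\frac1{\mathcal N}=1-O\!\left(\frac{N!}{(2N+1)!}\epsilon^{2(N+1)}\right)\quad(\epsilon\to0).$$
   Context: Single-mode Fock basis $\{|n\rangle\}_{n\ge0}$. For $\alpha\in\mathbb C$, the coherent state is $|\alpha\rangle=e^{-|\alpha|^2/2}\sum_{n=0}^\infty\frac{\alpha^n}{\sqrt{n!}}|n\rangle$; Greek letters (and expressions such as $\epsilon e^{2\pi i k/(N+1)}$) inside kets denote coherent states, while $|N\rangle$ is the Fock state with $N$ photons. *)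

From Stdlib Require Import Reals Factorial.
From Coquelicot Require Import Coquelicot.
Open Scope R_scope.

Definition Cexpi (theta : R) : C := (cos theta, sin theta).

(* Fock-basis amplitude <n|alpha> of the coherent state |alpha>:
   e^{-|alpha|^2/2} alpha^n / sqrt(n!) *)
Definition coherent (alpha : C) (n : nat) : C :=
  (RtoC (exp (- (Cmod alpha) ^ 2 / 2) / sqrt (INR (fact n))) * Cpow alpha n)%C.

Definition normN (N : nat) (eps : R) : R :=
  INR (fact N) *
  Series (fun k => eps ^ (2 * (k * (N + 1))) / INR (fact (k * (N + 1) + N))).

(* Fock-basis amplitudes <n|Ntilde> of the state |Ntilde> *)
Definition Ntilde (N : nat) (eps : R) (n : nat) : C :=
  (RtoC (/ sqrt (normN N eps) * sqrt (INR (fact N)) / INR (N + 1)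
        * exp (eps ^ 2 / 2) / eps ^ N) *
  sum_n (G := C_AbelianMonoid)
    (fun k => Cexpi (- 2 * PI * INR k * INR N / INR (N + 1)) *
              coherent (RtoC eps * Cexpi (2 * PI * INR k / INR (N + 1))) n)%C N)%C.

From Stdlib Require Import Reals Factorial Arith Lia Lra.
From Coquelicot Require Import Coquelicot.
Open Scope R_scope.

(** At the Fock index [n] the [N+1] coherent states contribute the phases
    [exp (2 i pi k (n+1)/(N+1))], [k = 0..N], whose sum is [N+1] when
    [n = q(N+1)+N] and vanishes otherwise.  Hence [|Ntilde>] is supported on
    the Fock states [q(N+1)+N], with weights [N!/normN] times the terms of the
    series defining [normN]; they sum to 1, and the weight of [q = 0] is the
    fidelity [1/normN].  Finally [normN - 1] is [N!] times the tail of that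
    series, which is dominated by a geometric series with first term
    [eps^(2(N+1))/(2N+1)!]. *)

Lemma Cexpi_add x y : (Cexpi x * Cexpi y)%C = Cexpi (x + y).
Proof. unfold Cexpi, Cmult; simpl. rewrite cos_plus, sin_plus. f_equal; ring. Qed.

Lemma Cexpi_0 : Cexpi 0 = 1%C.
Proof. unfold Cexpi. rewrite cos_0, sin_0. reflexivity. Qed.

Lemma Cexpi_pow x n : (Cexpi x ^ n)%C = Cexpi (INR n * x).
Proof.
  induction n as [|n IH]; simpl Cpow.
  - now rewrite Rmult_0_l, Cexpi_0.
  - rewrite IH, Cexpi_add, S_INR. f_equal. ring.
Qed.

Lemma Cexpi_add_2PI_mult x q : Cexpi (x + INR q * (2 * PI)) = Cexpi x.
Proof.
  unfold Cexpi. replace (x + INR q * (2 * PI)) with (x + 2 * INR q * PI) by ring.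
  now rewrite cos_period, sin_period.
Qed.

Lemma Cexpi_2PI_mult q : Cexpi (INR q * (2 * PI)) = 1%C.
Proof. rewrite <- Cexpi_0, <- (Cexpi_add_2PI_mult 0 q). f_equal. ring. Qed.

Lemma Cmod_Cexpi x : Cmod (Cexpi x) = 1.
Proof.
  unfold Cmod, Cexpi; simpl fst; simpl snd.
  rewrite <- sqrt_1. f_equal. rewrite <- (sin2_cos2 x). unfold Rsqr. ring.
Qed.

Lemma Cexpi_neq_1 x : 0 < x < 2 * PI -> Cexpi x <> 1%C.
Proof.
  intros Hx E. apply (f_equal fst) in E. simpl in E.
  replace x with (2 * (x / 2)) in E by field.
  rewrite cos_2a_sin in E.
  assert (0 < sin (x / 2)) by (apply sin_gt_0; lra).
  nra.
Qed.

Lemma geom_sum_C z n : ((z - 1) * sum_n (fun k => z ^ k) n = z ^ S n - 1)%C.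
Proof.
  induction n as [|n IH].
  - rewrite sum_O. simpl. ring.
  - rewrite sum_Sn. change plus with Cplus.
    rewrite Cmult_plus_distr_l, IH. simpl. ring.
Qed.

Lemma sum_n_const_1_C n : sum_n (fun k => 1 ^ k)%C n = RtoC (INR (S n)).
Proof.
  induction n as [|n IH].
  - now rewrite sum_O.
  - rewrite sum_Sn, IH, Cpow_1_l, (S_INR (S n)), RtoC_plus. reflexivity.
Qed.

Lemma sum_n_pow_root_eq_0 z n :
  (z ^ S n)%C = 1%C -> z <> 1%C -> sum_n (fun k => z ^ k)%C n = RtoC 0.
Proof.
  intros Hzn Hz1.
  assert (Hz : (z - 1)%C <> 0%C).
  { intro E. apply Hz1. replace z with ((z - 1) + 1)%C by ring. rewrite E. ring. }
  pose proof (geom_sum_C z n) as G.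
  rewrite Hzn in G. replace (1 - 1)%C with (RtoC 0) in G by ring.
  set (s := sum_n _ n) in *.
  replace s with (/ (z - 1) * ((z - 1) * s))%C by (field; exact Hz).
  rewrite G. apply Cmult_0_r.
Qed.

Lemma INR_succ_pos M : 0 < INR (M + 1).
Proof. apply lt_0_INR. lia. Qed.

Lemma succ_mod_eq_0 p n : (S n) mod (p + 1) = 0%nat <-> n mod (p + 1) = p.
Proof.
  split; intro H.
  - apply Nat.Div0.mod_divides in H as [[|c] Hc]; [lia |].
    symmetry. apply Nat.mod_unique with c; lia.
  - pose proof (Nat.div_mod_eq n (p + 1)).
    apply Nat.Div0.mod_divides. exists (S (n / (p + 1))). lia.
Qed.

Section RootsOfUnity.

Variable M : nat.

Let root_of_unity (m : nat) := Cexpi (2 * PI * INR m / INR (M + 1)).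

Lemma sum_roots_of_unity_mod0 m : m mod (M + 1) = 0%nat ->
  sum_n (fun k => root_of_unity m ^ k)%C M = RtoC (INR (M + 1)).
Proof.
  intro Hm. apply Nat.Div0.mod_divides in Hm as [q ->].
  assert (Hz : root_of_unity ((M + 1) * q) = 1%C).
  { unfold root_of_unity. rewrite <- (Cexpi_2PI_mult q). f_equal.
    rewrite mult_INR. field. apply Rgt_not_eq, INR_succ_pos. }
  rewrite Hz, sum_n_const_1_C. f_equal. f_equal. lia.
Qed.

Lemma sum_roots_of_unity_mod_neq0 m : m mod (M + 1) <> 0%nat ->
  sum_n (fun k => root_of_unity m ^ k)%C M = RtoC 0.
Proof.
  intro Hm.
  pose proof (Nat.div_mod_eq m (M + 1)) as Hdiv.
  pose proof (Nat.mod_upper_bound m (M + 1) ltac:(lia)) as Hr.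
  set (q := (m / (M + 1))%nat) in *. set (r := (m mod (M + 1))%nat) in *.
  pose proof (INR_succ_pos M) as HM.
  assert (HrM : 0 < INR r < INR (M + 1)) by (split; [apply lt_0_INR | apply lt_INR]; lia).
  assert (Hz : root_of_unity m = Cexpi (2 * PI * INR r / INR (M + 1))).
  { unfold root_of_unity.
    rewrite <- (Cexpi_add_2PI_mult (2 * PI * INR r / INR (M + 1)) q).
    f_equal. rewrite Hdiv at 1. rewrite plus_INR, mult_INR. field. lra. }
  apply sum_n_pow_root_eq_0; rewrite Hz.
  - rewrite Cexpi_pow, <- (Cexpi_2PI_mult r). f_equal.
    rewrite <- Nat.add_1_r. field. lra.
  - apply Cexpi_neq_1. pose proof PI_RGT_0.
    assert (0 < INR r / INR (M + 1) < 1)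
      by (split; [apply Rdiv_lt_0_compat | apply (Rdiv_lt_1 _ _ HM)]; lra).
    unfold Rdiv in *. nra.
Qed.

End RootsOfUnity.

(* [-2 pi k N/(N+1) = 2 pi k/(N+1) - 2 pi k]: the prefactor of the k-th coherent
   state is one more power of its phase. *)
Lemma Ntilde_phase N n k :
  (Cexpi (- 2 * PI * INR k * INR N / INR (N + 1)) *
   Cexpi (2 * PI * INR k / INR (N + 1)) ^ n)%C =
  (Cexpi (2 * PI * INR (S n) / INR (N + 1)) ^ k)%C.
Proof.
  pose proof (INR_succ_pos N).
  rewrite <- (Cexpi_add_2PI_mult _ k).
  replace (- 2 * PI * INR k * INR N / INR (N + 1) + INR k * (2 * PI))
    with (2 * PI * INR k / INR (N + 1)) by (rewrite plus_INR in *; simpl in *; field; lra).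
  change (Cexpi (2 * PI * INR k / INR (N + 1)) ^ S n =
          Cexpi (2 * PI * INR (S n) / INR (N + 1)) ^ k)%C.
  rewrite !Cexpi_pow. f_equal. field. lra.
Qed.

Lemma Ntilde_summand N eps n k :
  (Cexpi (- 2 * PI * INR k * INR N / INR (N + 1)) *
   coherent (RtoC eps * Cexpi (2 * PI * INR k / INR (N + 1))) n)%C =
  (RtoC (exp (- eps ^ 2 / 2) / sqrt (INR (fact n)) * eps ^ n)
   * Cexpi (2 * PI * INR (S n) / INR (N + 1)) ^ k)%C.
Proof.
  unfold coherent.
  rewrite Cmod_mult, Cmod_R, Cmod_Cexpi, Rmult_1_r, pow2_abs.
  rewrite Cpow_mult_l, <- RtoC_pow, <- Ntilde_phase, RtoC_mult. ring.
Qed.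

Lemma Ntilde_eq N eps n :
  Ntilde N eps n =
  (RtoC (/ sqrt (normN N eps) * sqrt (INR (fact N)) / INR (N + 1) / eps ^ N
         * eps ^ n / sqrt (INR (fact n)))
   * sum_n (fun k => Cexpi (2 * PI * INR (S n) / INR (N + 1)) ^ k)%C N)%C.
Proof.
  unfold Ntilde.
  rewrite (sum_n_ext _ _ N (Ntilde_summand N eps n)).
  rewrite (sum_n_mult_l (K := C_Ring)). change mult with Cmult.
  rewrite Cmult_assoc, <- RtoC_mult. f_equal. f_equal.
  replace (- eps ^ 2 / 2) with (- (eps ^ 2 / 2)) by field.
  rewrite exp_Ropp. pose proof (exp_pos (eps ^ 2 / 2)).
  (* Only [exp (eps^2/2)] cancels: abstracting the other inverses keeps [field]
     from asking for them to be nonzero. *)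
  unfold Rdiv.
  generalize (/ sqrt (normN N eps)) (/ INR (N + 1)) (/ eps ^ N) (/ sqrt (INR (fact n))).
  intros. field. lra.
Qed.

Lemma Series_nonneg (a : nat -> R) : (forall n, 0 <= a n) -> ex_series a -> 0 <= Series a.
Proof.
  intros Ha Hex.
  rewrite <- (Rmult_0_l (Series a)), <- Series_scal_l.
  apply Series_le; [| exact Hex].
  intro n. rewrite Rmult_0_l. auto with real.
Qed.

Lemma pow_even_nonneg x m : 0 <= x ^ (2 * m).
Proof. rewrite pow_mult. apply pow_le, pow2_ge_0. Qed.

Definition normN_coef (N : nat) (eps : R) (q : nat) : R :=
  eps ^ (2 * (q * (N + 1))) / INR (fact (q * (N + 1) + N)).

Lemma normN_Series N eps : normN N eps = INR (fact N) * Series (normN_coef N eps).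
Proof. reflexivity. Qed.

Lemma normN_coef_nonneg N eps q : 0 <= normN_coef N eps q.
Proof.
  apply Rmult_le_pos; [apply pow_even_nonneg |].
  apply Rlt_le, Rinv_0_lt_compat, INR_fact_lt_0.
Qed.

Lemma normN_coef_0 N eps : normN_coef N eps 0 = / INR (fact N).
Proof. unfold normN_coef. simpl. field. apply INR_fact_neq_0. Qed.

Lemma normN_coef_le N eps q :
  normN_coef N eps q <= / INR (fact q) * (eps ^ (2 * (N + 1))) ^ q.
Proof.
  unfold normN_coef. rewrite <- pow_mult, Rmult_comm.
  replace (2 * (N + 1) * q)%nat with (2 * (q * (N + 1)))%nat by lia.
  apply Rmult_le_compat_l; [apply pow_even_nonneg |].
  apply Rinv_le_contravar; [apply INR_fact_lt_0 |].
  apply le_INR, fact_le. nia.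
Qed.

Lemma ex_series_normN_coef N eps : ex_series (normN_coef N eps).
Proof.
  apply (@ex_series_le R_AbsRing R_CompleteNormedModule _
           (fun q => / INR (fact q) * (eps ^ (2 * (N + 1))) ^ q)).
  - intro q. rewrite Rabs_pos_eq by apply normN_coef_nonneg. apply normN_coef_le.
  - exists (exp (eps ^ (2 * (N + 1)))). apply is_pseries_R, is_exp_Reals.
Qed.

Lemma is_series_normN_coef N eps :
  is_series (normN_coef N eps) (normN N eps / INR (fact N)).
Proof.
  rewrite normN_Series. replace (INR (fact N) * Series (normN_coef N eps) / INR (fact N))
    with (Series (normN_coef N eps)) by (field; apply INR_fact_neq_0).
  apply Series_correct, ex_series_normN_coef.
Qed.

Lemma normN_eq_1_add_tail N eps :
  normN N eps = 1 + INR (fact N) * Series (fun q => normN_coef N eps (S q)).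
Proof.
  rewrite normN_Series, Series_incr_1, normN_coef_0 by apply ex_series_normN_coef.
  field. apply INR_fact_neq_0.
Qed.

Lemma Series_normN_tail_nonneg N eps : 0 <= Series (fun q => normN_coef N eps (S q)).
Proof.
  apply Series_nonneg; [intro; apply normN_coef_nonneg |].
  apply (ex_series_incr_1 (normN_coef N eps)), ex_series_normN_coef.
Qed.

Lemma normN_ge_1 N eps : 1 <= normN N eps.
Proof.
  rewrite normN_eq_1_add_tail.
  pose proof (INR_fact_lt_0 N). pose proof (Series_normN_tail_nonneg N eps). nra.
Qed.

Lemma normN_coef_S_le N eps q :
  normN_coef N eps (S q) <=
  eps ^ (2 * (N + 1)) * (eps ^ (2 * (N + 1))) ^ q / INR (fact (2 * N + 1)).
Proof.
  unfold normN_coef.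
  replace (2 * (S q * (N + 1)))%nat with (2 * (N + 1) + 2 * (N + 1) * q)%nat by lia.
  rewrite pow_add, (pow_mult eps (2 * (N + 1)) q).
  apply Rmult_le_compat_l.
  - apply Rmult_le_pos; [apply pow_even_nonneg | apply pow_le, pow_even_nonneg].
  - apply Rinv_le_contravar; [apply INR_fact_lt_0 |].
    apply le_INR, fact_le. nia.
Qed.

Lemma Series_normN_tail_le N eps :
  eps ^ (2 * (N + 1)) < 1 ->
  Series (fun q => normN_coef N eps (S q)) <=
  eps ^ (2 * (N + 1)) / (1 - eps ^ (2 * (N + 1))) / INR (fact (2 * N + 1)).
Proof.
  set (y := eps ^ (2 * (N + 1))). intro Hy.
  assert (Hy0 : 0 <= y) by apply pow_even_nonneg.
  pose proof (INR_fact_lt_0 (2 * N + 1)).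
  assert (Hgeom : is_series (fun q => y / INR (fact (2 * N + 1)) * y ^ q)
                    (y / (1 - y) / INR (fact (2 * N + 1)))).
  { replace (y / (1 - y) / INR (fact (2 * N + 1)))
      with (y / INR (fact (2 * N + 1)) * / (1 - y))
      by (field; split; lra).
    apply (@is_series_scal_l R_AbsRing R_NormedModule), is_series_geom.
    rewrite Rabs_pos_eq; lra. }
  rewrite <- (is_series_unique _ _ Hgeom).
  apply Series_le; [| eexists; exact Hgeom].
  intro q. split; [apply normN_coef_nonneg |].
  replace (y / INR (fact (2 * N + 1)) * y ^ q) with (y * y ^ q / INR (fact (2 * N + 1)))
    by (field; apply INR_fact_neq_0).
  apply normN_coef_S_le.
Qed.

Lemma normN_sub_1_le N eps :
  Rabs eps < 1 / 2 ->
  normN N eps - 1 <=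
  2 * (INR (fact N) / INR (fact (2 * N + 1)) * eps ^ (2 * (N + 1))).
Proof.
  intro Heps.
  assert (Heps2 : 0 <= eps ^ 2 <= 1 / 4).
  { rewrite <- pow2_abs. pose proof (Rabs_pos eps). simpl. nra. }
  set (y := eps ^ (2 * (N + 1))).
  assert (Hy : 0 <= y <= 1 / 2).
  { unfold y. rewrite pow_mult, Nat.add_1_r, <- tech_pow_Rmult.
    assert ((eps ^ 2) ^ N <= 1) by (rewrite <- (pow1 N); apply pow_incr; lra).
    pose proof (pow_le (eps ^ 2) N (proj1 Heps2)). nra. }
  pose proof (INR_fact_lt_0 N). pose proof (INR_fact_lt_0 (2 * N + 1)).
  pose proof (Series_normN_tail_le N eps ltac:(fold y; lra)) as Htail. fold y in Htail.
  assert (Hinv : / (1 - y) <= 2).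
  { replace 2 with (/ (1 / 2)) by field. apply Rinv_le_contravar; lra. }
  apply Rle_trans with (INR (fact N) * (y / (1 - y) / INR (fact (2 * N + 1)))).
  - rewrite normN_eq_1_add_tail. ring_simplify. apply Rmult_le_compat_l; lra.
  - replace (INR (fact N) * (y / (1 - y) / INR (fact (2 * N + 1))))
      with (INR (fact N) / INR (fact (2 * N + 1)) * y * / (1 - y)) by (field; lra).
    replace (2 * (INR (fact N) / INR (fact (2 * N + 1)) * y))
      with (INR (fact N) / INR (fact (2 * N + 1)) * y * 2) by ring.
    apply Rmult_le_compat_l; [| exact Hinv].
    apply Rmult_le_pos; [apply Rlt_le, Rdiv_lt_0_compat |]; lra.
Qed.

Lemma Rabs_inv_sub_1_le x : 1 <= x -> Rabs (/ x - 1) <= x - 1.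
Proof.
  intro Hx.
  assert (Hinv : 0 < / x <= 1).
  { split; [apply Rinv_0_lt_compat; lra |].
    rewrite <- Rinv_1. apply Rinv_le_contravar; lra. }
  rewrite Rabs_left1 by lra.
  assert (x * / x = 1) by (field; lra).
  nra.
Qed.

Definition sum_first (b : nat -> R) (j : nat) : R :=
  match j with 0%nat => 0 | S j' => sum_n b j' end.

Section SparseSeries.

Variables (p : nat) (a b : nat -> R).
Hypothesis a_sparse :
  forall n, a n = if n mod (p + 1) =? p then b (n / (p + 1))%nat else 0.

Lemma sum_n_sparse n : sum_n a n = sum_first b (S n / (p + 1)).
Proof.
  assert (step : forall n, sum_first b (S n / (p + 1)) = sum_first b (n / (p + 1)) + a n).
  { intro m. rewrite a_sparse.
    pose proof (Nat.div_mod_eq m (p + 1)).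
    pose proof (Nat.mod_upper_bound m (p + 1) ltac:(lia)).
    destruct (Nat.eqb_spec (m mod (p + 1)) p) as [Hr | Hr].
    - rewrite <- (Nat.div_unique (S m) (p + 1) (S (m / (p + 1))) 0) by lia.
      destruct (m / (p + 1))%nat; simpl; [rewrite sum_O | rewrite sum_Sn];
        change plus with Rplus; ring.
    - rewrite <- (Nat.div_unique (S m) (p + 1) (m / (p + 1)) (S (m mod (p + 1)))) by lia.
      ring. }
  induction n as [|n IH].
  - rewrite sum_O, step, Nat.Div0.div_0_l. simpl. ring.
  - rewrite sum_Sn, IH, (step (S n)). reflexivity.
Qed.

Lemma is_series_sparse l : is_series b l -> is_series a l.
Proof.
  intro Hb. change (is_lim_seq (sum_n a) l).
  apply is_lim_seq_ext with (fun n => sum_first b (S n / (p + 1))).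
  { intro n. symmetry. apply sum_n_sparse. }
  apply (is_lim_seq_subseq (sum_first b) l (fun n => S n / (p + 1))%nat).
  - intros P [N0 HP]. exists (N0 * (p + 1))%nat. intros n Hn. apply HP.
    apply Nat.div_le_lower_bound; nia.
  - apply is_lim_seq_incr_1. exact Hb.
Qed.

End SparseSeries.

Lemma Cmod_Ntilde_sq N eps n : eps <> 0 ->
  Cmod (Ntilde N eps n) ^ 2 =
  if n mod (N + 1) =? N
  then INR (fact N) / normN N eps * normN_coef N eps (n / (N + 1))
  else 0.
Proof.
  intro Heps. rewrite Ntilde_eq.
  destruct (Nat.eqb_spec (n mod (N + 1)) N) as [Hn | Hn].
  - rewrite sum_roots_of_unity_mod0 by (apply succ_mod_eq_0; exact Hn).
    rewrite <- RtoC_mult, Cmod_R, pow2_abs.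
    pose proof (Nat.div_mod_eq n (N + 1)) as Hdiv. rewrite Hn in Hdiv.
    set (q := (n / (N + 1))%nat) in *. clearbody q.
    assert (n = q * (N + 1) + N)%nat as -> by lia.
    unfold normN_coef. set (m := (q * (N + 1))%nat).
    pose proof (normN_ge_1 N eps). pose proof (INR_succ_pos N).
    pose proof (INR_fact_lt_0 N). pose proof (INR_fact_lt_0 (m + N)).
    assert (eps ^ N <> 0) by (apply pow_nonzero; exact Heps).
    rewrite pow_add, Nat.mul_comm, pow_mult.
    transitivity (sqrt (INR (fact N)) ^ 2 / sqrt (normN N eps) ^ 2 *
                  ((eps ^ m) ^ 2 / sqrt (INR (fact (m + N))) ^ 2)).
    + field. repeat split; try apply Rgt_not_eq, sqrt_lt_R0; lra.
    + rewrite !pow2_sqrt by lra. reflexivity.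
  - rewrite sum_roots_of_unity_mod_neq0 by (rewrite succ_mod_eq_0; exact Hn).
    rewrite Cmult_0_r, Cmod_0. ring.
Qed.

Theorem corollary1 (N : nat) :
  (* for every nonzero eps: |Ntilde> is normalized and |<N|Ntilde>|^2 = 1/normN *)
  (forall eps : R, eps <> 0 ->
     is_series (fun n => Cmod (Ntilde N eps n) ^ 2) 1 /\
     Cmod (Ntilde N eps N) ^ 2 = / normN N eps) /\
  (* 1/normN = 1 - O(N!/(2N+1)! eps^(2(N+1))) as eps -> 0 *)
  (exists K delta : R, 0 < delta /\
     forall eps : R, eps <> 0 -> Rabs eps < delta ->
       Rabs (/ normN N eps - 1) <=
         K * (INR (fact N) / INR (fact (2 * N + 1)) * eps ^ (2 * (N + 1)))).
Proof.
  split.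
  - intros eps Heps.
    pose proof (normN_ge_1 N eps). pose proof (INR_fact_lt_0 N).
    split.
    + apply (is_series_sparse N _ (fun q => INR (fact N) / normN N eps * normN_coef N eps q)).
      { intro n. apply Cmod_Ntilde_sq, Heps. }
      replace 1 with (INR (fact N) / normN N eps * (normN N eps / INR (fact N)))
        by (field; lra).
      apply (@is_series_scal_l R_AbsRing R_NormedModule), is_series_normN_coef.
    + rewrite Cmod_Ntilde_sq, Nat.mod_small, Nat.eqb_refl, Nat.div_small, normN_coef_0
        by (lia || exact Heps).
      field. lra.
  - exists 2, (1 / 2). split; [lra |].
    intros eps _ Heps.
    eapply Rle_trans; [apply Rabs_inv_sub_1_le, normN_ge_1 | apply normN_sub_1_le, Heps].
Qed.
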